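(* Let $k=2r+1$ with $r\geq 1$ and $G=BS(1,k)$. Let $\mathcal{C}_o$ be the set of words over $\{a^{\pm1},t^{\pm1}\}$ \[\mathcal{C}_o=\{\epsilon,a^{\pm1},\ldots,a^{\pm(r+1)}\}\cup\{a^{x_0}ta^{x_1}t\cdots ta^{x_d}t^{-d}\mid d\geq1,\ x_0\neq0,\ x_d\neq0,\ A\},\] where $A$ denotes the conditions: $|x_d|\leq r+1$; $|x_i|\leq r$ for $0\le i<d$; and if $x_{d-1}=\pm r$ then $x_d\neq\mp1$. Then $\mathcal{C}_o$ is a set of unique geodesic representatives for the conjugacy classes of $G$ contained in the subgroup $\mathbb{Z}[1/k]$: every conjugacy class of $G$ contained in $\mathbb{Z}[1/k]$ is represented by exactly one word of $\mathcal{C}_o$, and each word of $\mathcal{C}_o$ is a geodesic word whose length equals the length of its conjugacy class.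
   Context: $BS(1,k)=\langle a,t\mid tat^{-1}=a^k\rangle\cong \mathbb{Z}[1/k]\rtimes\mathbb{Z}$ via $a\mapsto(1,0)$, $t\mapsto(0,1)$, where the generator of $\mathbb{Z}$ acts on $\mathbb{Z}[1/k]=\{x\in\mathbb{Q}: k^ex\in\mathbb{Z}\text{ for some }e\}$ by multiplication by $k$; the subgroup $\mathbb{Z}[1/k]$ consists of the elements $(x,0)$. For an integer $x$, $a^x$ denotes the word consisting of $|x|$ copies of $a$ (if $x>0$) or of $a^{-1}$ (if $x<0$); $\epsilon$ is the empty word. Word length is with respect to $\{a,t\}$; a word is geodesic if no shorter word represents the same element; the length of a conjugacy class is the minimal length of its elements. *)

(* BS(1,k) realized concretely as Z[1/k] x| Z inside rat * int. *)
From HB Require Import structures.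
From mathcomp Require Import all_boot all_order all_algebra.
Set Implicit Arguments. Unset Strict Implicit. Unset Printing Implicit Defensive.
Import Order.TTheory GRing.Theory Num.Theory.
Local Open Scope ring_scope.

Definition elt := (rat * int)%type.

Definition inZk (k : nat) (x : rat) : Prop :=
  exists (e : nat) (z : int), (k%:R : rat) ^+ e * x = z%:~R.

Definition inG (k : nat) (g : elt) : Prop := inZk k g.1.

(* (x,m)(y,n) = (x + k^m y, m + n) : the generator of Z acts by mult. by k *)
Definition mulG (k : nat) (g h : elt) : elt :=
  (g.1 + (k%:R : rat) ^ g.2 * h.1, g.2 + h.2).
Definition invG (k : nat) (g : elt) : elt :=
  (- ((k%:R : rat) ^ (- g.2) * g.1), - g.2).
Definition oneG : elt := (0, 0).

Inductive letter := La | Lai | Lt | Lti.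

Definition gen (k : nat) (l : letter) : elt :=
  match l with
  | La => (1, 0) | Lai => (-1, 0) | Lt => (0, 1) | Lti => invG k (0, 1)
  end.

Definition word := seq letter.

Definition eval (k : nat) (w : word) : elt :=
  foldr (fun l acc => mulG k (gen k l) acc) oneG w.

Definition apow (x : int) : word :=
  match x with Posz n => nseq n La | Negz n => nseq n.+1 Lai end.

Definition conjugate (k : nat) (g h : elt) : Prop :=
  exists c : elt, inG k c /\ mulG k (mulG k c g) (invG k c) = h.

Definition geodesic (k : nat) (w : word) : Prop :=
  forall v : word, eval k v = eval k w -> (size w <= size v)%N.

(* the word a^{x_0} t a^{x_1} t ... t a^{x_{d-1}} t a^{x_d} t^{-d}, with xs = [x_0;..;x_{d-1}] *)
Definition cword (xs : seq int) (xd : int) : word :=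
  flatten [seq apow x ++ [:: Lt] | x <- xs] ++ apow xd ++ nseq (size xs) Lti.

Definition inCo (r : nat) (w : word) : Prop :=
  (exists x : int, (`|x| <= r.+1)%N /\ w = apow x)
  \/ (exists (xs : seq int) (xd : int),
        (1 <= size xs)%N /\
        nth 0 xs 0 != 0 /\
        xd != 0 /\
        (`|xd| <= r.+1)%N /\
        all (fun x => `|x| <= r)%N xs /\
        (last 0 xs = r%:Z -> xd != -1) /\
        (last 0 xs = - r%:Z -> xd != 1) /\
        w = cword xs xd).

(* The conjugates of (x, 0) are the (k^j x, 0), so every class inside Z[1/k] contains exactly
   one integer m that is 0 or not divisible by k; the words of C_o are exactly the balanced
   base-k expansions nf m of these integers, since a^x0 t a^x1 ... t a^xd t^-d evaluates to
   x0 + x1 k + ... + xd k^d.  For minimality, a word for a conjugate of m gives, after scaling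
   by a power of k, an expansion of some k^n m whose digit weight plus twice its depth is at
   most the word length.  The length of nf never exceeds that quantity, because it is
   1-Lipschitz and grows by at most |c| + 2 under N |-> c + k N; and it does not decrease
   under N |-> k N. *)

From mathcomp Require Import all_boot all_order all_algebra.
From mathcomp Require Import zify ring.
Import GRing.Theory Num.Theory.
Set Implicit Arguments.
Unset Strict Implicit.
Unset Printing Implicit Defensive.
Local Open Scope ring_scope.

Lemma abs_ind (P : int -> Prop) :
  (forall N, (forall M, (`|M| < `|N|)%N -> P M) -> P N) -> forall N, P N.
Proof.
move=> IH N; move: {2}(`|N|).+1 (ltnSn `|N|) => n.
elim: n N => [|n IHn] N hN; first by [].
by apply: IH => M hM; apply: IHn; lia.
Qed.

Section Group.

Variable k : nat.
Hypothesis k_gt0 : (0 < k)%N.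
Local Notation K := (k%:R : rat).

Lemma K_neq0 : K != 0.
Proof. by rewrite pnatr_eq0 -lt0n. Qed.

Lemma intr_natX n : ((k%:Z ^+ n)%:~R : rat) = K ^+ n.
Proof. by rewrite rmorphXn /= -pmulrn. Qed.

Lemma mulGA g h f : mulG k (mulG k g h) f = mulG k g (mulG k h f).
Proof.
case: g h f => [g1 g2] [h1 h2] [f1 f2]; rewrite /mulG /=.
by rewrite expfzDr ?K_neq0 // mulrDr addrA mulrA addrA.
Qed.

Lemma mul1G g : mulG k oneG g = g.
Proof. by case: g => x h; rewrite /mulG /= expr0z mul1r !add0r. Qed.

Lemma eval_cat u v : eval k (u ++ v) = mulG k (eval k u) (eval k v).
Proof. by elim: u => [|l u IH] /=; rewrite ?mul1G // IH mulGA. Qed.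

Lemma eval_apow x : eval k (apow x) = (x%:~R, 0).
Proof.
have eval_nseq n l c : gen k l = (c, 0) -> eval k (nseq n l) = (c *+ n, 0).
  by move=> hl; elim: n => [|n IH] //=; rewrite IH hl /mulG /= expr0z mul1r add0r mulrS.
case: x => n; rewrite /apow; first by rewrite (eval_nseq _ _ 1) // -pmulrn.
by rewrite (eval_nseq _ _ (-1)) // NegzE mulNrn intrN -pmulrn.
Qed.

Lemma conjugateP x h : conjugate k (x, 0) h <-> exists j : int, h = (K ^ j * x, 0).
Proof.
split.
  case=> [[c1 c2] [_ <-]]; exists c2.
  rewrite /mulG /invG /= addr0 subrr mulrN mulrA -expfzDr ?K_neq0 //.
  by rewrite subrr expr0z mul1r; congr (_, _); ring.
case=> j ->; exists (0, j); split; first by exists 0%N, 0; rewrite mulr0.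
by rewrite /mulG /invG /= addr0 subrr mulr0 oppr0 mulr0 addr0 add0r.
Qed.

End Group.

Lemma size_apow x : size (apow x) = `|x|%N.
Proof. by case: x => n /=; rewrite size_nseq. Qed.

Lemma cword_nil xd : cword [::] xd = apow xd.
Proof. by rewrite /cword /= cats0. Qed.

Lemma cword_cons x xs xd :
  cword (x :: xs) xd = apow x ++ Lt :: cword xs xd ++ [:: Lti].
Proof. by rewrite /cword map_cons [flatten _]/= [size _]/= -addn1 nseqD -!catA. Qed.

Section Expansions.

Variable k : nat.
Hypothesis k_gt0 : (0 < k)%N.
Local Notation K := (k%:R : rat).

Definition kval (C : seq int) : int := foldr (fun c acc => c + k%:Z * acc) 0 C.
Definition weight (C : seq int) : nat := sumn (map absz C).

Lemma weight_cons c C : weight (c :: C) = (`|c| + weight C)%N.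
Proof. by []. Qed.

Fixpoint addat (p : nat) (a : int) (C : seq int) : seq int :=
  match p, C with
  | 0, [::] => [:: a]
  | 0, c :: C => (a + c) :: C
  | p.+1, [::] => 0 :: addat p a [::]
  | p.+1, c :: C => c :: addat p a C
  end.

Lemma kval_addat p a C : kval (addat p a C) = kval C + a * k%:Z ^+ p.
Proof.
elim: p C => [|p IH] [|c C] /=; rewrite ?IH /= ?exprS; ring.
Qed.

Lemma weight_addat p a C : (weight (addat p a C) <= weight C + `|a|)%N.
Proof.
rewrite /weight; elim: p C => [|p IH] [|c C] /=; try lia.
- by have := IH [::]; rewrite /=; lia.
- by have := IH C; lia.
Qed.

Lemma size_addat p a C : (size (addat p a C) <= maxn (size C) p.+1)%N.
Proof.
elim: p C => [|p IH] [|c C] /=; try lia.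
- by have := IH [::]; rewrite /=; lia.
- by have := IH C; lia.
Qed.

(* Reading a word for g = (X, h), let -p and D - p be the least and largest t-exponents of
   its prefixes: sorting its a-letters by height gives X k^p = kval C, and its t-letters
   travel at least 2D - |h|. *)
Definition bounded_expansion (g : elt) (n p D : nat) (C : seq int) : Prop :=
  [/\ 0 <= g.2 + p%:Z <= D%:Z, (p <= D)%N, (size C <= D.+1)%N,
      g.1 * K ^+ p = (kval C)%:~R
    & (weight C + 2 * D <= n + `|g.2|)%N].

Lemma word_expansion v :
  exists (p D : nat) (C : seq int), bounded_expansion (eval k v) (size v) p D C.
Proof.
elim: v => [|l v [p [D [C]]]]; first by exists 0%N, 0%N, [::]; split => //=; rewrite mul0r.
rewrite /bounded_expansion /=; case: (eval k v) => x h /= [hpos hpD hsize hval hweight].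
have prepend_a e : `|e|%N = 1%N ->
    exists p D C, bounded_expansion (e%:~R + x, h) (size v).+1 p D C.
  move=> he; exists p, D, (addat p e C); split => //=.
  - by have := size_addat p e C; lia.
  - by rewrite kval_addat mulrDl hval intrD intrM intr_natX addrC.
  - by have := weight_addat p e C; lia.
case: l; rewrite /mulG /= ?expr0z ?mul1r ?add0r.
- exact: (prepend_a 1).
- exact: (prepend_a (-1)).
- case: p hpos hpD hval hweight => [|p] hpos hpD hval hweight.
    exists 0%N, D.+1, (0 :: C); rewrite weight_cons; split => //=; try lia.
    by rewrite add0r intrM -pmulrn -hval expr1z mulrA.
  exists p, D, C; split => //=; try lia.
  by rewrite -hval exprS expr1z mulrCA mulrA.
- rewrite mulr0 oppr0 add0r.
  have hval' : K ^ (-1) * x * K ^+ p.+1 = (kval C)%:~R.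
    by rewrite -hval exprS -invr_expz expr1z; field; exact: K_neq0.
  have [hlt|hge] := ltnP p D; [exists p.+1, D, C | exists p.+1, D.+1, C]; split => //; lia.
Qed.

End Expansions.

Section Reduced.

Variable k : nat.
Hypothesis k_gt1 : (1 < k)%N.
Local Notation K := (k%:R : rat).

Definition reduced (m : int) : bool := (m == 0) || ~~ (k%:Z %| m)%Z.

Let k_gt0 : (0 < k)%N. Proof. exact: ltnW. Qed.

Lemma reduced_dvd m : reduced m -> (k%:Z %| m)%Z -> m = 0.
Proof. by case/orP=> [/eqP //|/negP]. Qed.

Lemma reduced_decomp z : exists (s : nat) (m : int), z = k%:Z ^+ s * m /\ reduced m.
Proof.
elim/abs_ind: z => z IH.
have [/dvdzP[q ez]|ndvd] := boolP (k%:Z %| z)%Z; last first.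
  by exists 0%N, z; rewrite expr0 mul1r /reduced ndvd orbT.
have [q0|q0] := eqVneq q 0.
  by exists 0%N, 0; rewrite ez q0 mul0r mulr0.
have [s [m [eq_q hm]]] := IH q ltac:(rewrite ez; nia).
by exists s.+1, m; rewrite ez eq_q exprS mulrC mulrA.
Qed.

Lemma inZk_reduced x : inZk k x -> exists (j m : int), x = K ^ j * m%:~R /\ reduced m.
Proof.
case=> e [z hz]; have [s [m [ez hm]]] := reduced_decomp z.
exists (s%:Z - e%:Z), m; split => //.
apply: (mulfI (expf_neq0 e (K_neq0 k_gt0))); rewrite hz ez intrM intr_natX.
rewrite expfzDr ?K_neq0 // -invr_expz -!exprnP; field; exact: expf_neq0 (K_neq0 _).
Qed.

Lemma expfz_intr_cases j (m V : int) : K ^ j * m%:~R = V%:~R ->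
  (exists n, V = k%:Z ^+ n * m) \/ (exists n, m = k%:Z ^+ n.+1 * V).
Proof.
case: j => n e; [left | right]; exists n; apply: (@intr_inj rat).
  by rewrite intrM intr_natX -e.
rewrite intrM intr_natX -e mulrA NegzE -invr_expz -exprnP mulfV ?mul1r //.
exact: expf_neq0 (K_neq0 _).
Qed.

Lemma reduced_expfz_int j m V : reduced m -> K ^ j * m%:~R = V%:~R ->
  exists n, V = k%:Z ^+ n * m.
Proof.
move=> hm e; case: (expfz_intr_cases e) => [//|[n em]].
exists 0%N; rewrite expr0 mul1r.
have m0 : m = 0 by apply: reduced_dvd; rewrite // em exprS -mulrA dvdz_mulr.
by apply: (@intr_inj rat); rewrite -e m0 mulr0.
Qed.

Lemma reduced_expfz_inj j1 j2 m1 m2 : reduced m1 -> reduced m2 ->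
  K ^ j1 * m1%:~R = K ^ j2 * m2%:~R -> m1 = m2.
Proof.
move=> hm1 hm2 e.
have e' : K ^ (j1 - j2) * m1%:~R = m2%:~R.
  by rewrite expfzDr ?K_neq0 // mulrAC e mulrAC -expfzDr ?K_neq0 // subrr expr0z mul1r.
have [[|n] em2] := reduced_expfz_int hm1 e'; first by rewrite em2 expr0 mul1r.
have m20 : m2 = 0 by apply: reduced_dvd; rewrite // em2 exprS -mulrA dvdz_mulr.
by move/esym/eqP: em2; rewrite m20 mulf_eq0 expf_eq0; lia.
Qed.

End Reduced.

Section BalancedExpansion.

Variable r : nat.
Hypothesis r_gt0 : (0 < r)%N.
Local Notation k := (2 * r + 1)%N.
Local Notation K := (k%:R : rat).
Let k_gt0 : (0 < k)%N. Proof. by rewrite addn1. Qed.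
Let k_gt1 : (1 < k)%N. Proof. lia. Qed.

Definition bmod (N : int) : int :=
  let rho := (N %% k)%Z in if rho <= r%:Z then rho else rho - k%:Z.
Definition bdiv (N : int) : int :=
  let rho := (N %% k)%Z in if rho <= r%:Z then (N %/ k)%Z else (N %/ k)%Z + 1.

Lemma bdivmodE N : N = bmod N + k%:Z * bdiv N.
Proof.
rewrite /bmod /bdiv; have := divz_eq N k.
by case: ifP => _; lia.
Qed.

Lemma abs_bmod_le N : (`|bmod N| <= r)%N.
Proof.
have kz0 : k%:Z != 0 by lia.
have kz_gt0 : 0 < k%:Z by lia.
rewrite /bmod; have := modz_ge0 N kz0; have := ltz_pmod N kz_gt0.
by case: ifP; lia.
Qed.

Lemma bdivmod_uniq N y q : (`|y| <= r)%N -> N = y + k%:Z * q ->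
  bmod N = y /\ bdiv N = q.
Proof.
move=> hy e; have e' := bdivmodE N; have hb := abs_bmod_le N.
have hq : bdiv N = q by nia.
split=> //; lia.
Qed.

Lemma bmod_eq0 N : (bmod N == 0) = (k%:Z %| N)%Z.
Proof.
apply/eqP/dvdzP => [hb|[q ->]]; first by exists (bdiv N); rewrite {1}(bdivmodE N) hb; lia.
by have [] := @bdivmod_uniq (q * k%:Z) 0 q; rewrite //; lia.
Qed.

Lemma abs_bdiv_lt N : (r.+1 < `|N|)%N -> (`|bdiv N| < `|N|)%N.
Proof. by have := bdivmodE N; have := abs_bmod_le N; nia. Qed.

Fixpoint nf_rec (n : nat) (N : int) : word :=
  if n is n'.+1 then
    if (`|N| <= r.+1)%N then apow N
    else apow (bmod N) ++ Lt :: nf_rec n' (bdiv N) ++ [:: Lti]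
  else [::].

Definition nf (N : int) : word := nf_rec (`|N|).+1 N.

Lemma nf_rec_stable n m N :
  (`|N| < n)%N -> (`|N| < m)%N -> nf_rec n N = nf_rec m N.
Proof.
elim: n m N => [|n IH] [|m] N //=; try lia.
move=> hn hm; case: ifP => // hN.
by rewrite (IH m) //; have := @abs_bdiv_lt N; lia.
Qed.

Lemma nf_small N : (`|N| <= r.+1)%N -> nf N = apow N.
Proof. by rewrite /nf /= => ->. Qed.

Lemma nf_large N : (r.+1 < `|N|)%N ->
  nf N = apow (bmod N) ++ Lt :: nf (bdiv N) ++ [:: Lti].
Proof.
move=> hN; rewrite /nf /= ifN; last by lia.
by rewrite (@nf_rec_stable _ (`|bdiv N|).+1) //; have := abs_bdiv_lt hN; lia.
Qed.

Lemma eval_nf N : eval k (nf N) = (N%:~R, 0).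
Proof.
elim/abs_ind: N => N IH.
have [hN|hN] := leqP `|N| r.+1; first by rewrite nf_small // eval_apow.
rewrite nf_large // !(eval_cat k_gt0) eval_apow /= (eval_cat k_gt0) IH ?abs_bdiv_lt //.
rewrite /mulG /invG /= !expr0z !expr1z !mul1r !mulr0 !oppr0 !addr0 !add0r.
by rewrite {3}(bdivmodE N) intrD intrM -pmulrn.
Qed.

Definition nflen (N : int) : nat := size (nf N).

Lemma nflen_small N : (`|N| <= r.+1)%N -> nflen N = `|N|%N.
Proof. by move=> hN; rewrite /nflen nf_small // size_apow. Qed.

Lemma nflen_large N : (r.+1 < `|N|)%N ->
  nflen N = (`|bmod N| + 2 + nflen (bdiv N))%N.
Proof. move=> hN; rewrite /nflen nf_large // size_cat /= size_cat size_apow /=; lia. Qed.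

Lemma nflenN N : nflen (- N) = nflen N.
Proof.
elim/abs_ind: N => N IH.
have [hN|hN] := leqP `|N| r.+1; first by rewrite !nflen_small ?abszN.
rewrite (nflen_large hN) nflen_large ?abszN //.
have [-> ->] : bmod (- N) = - bmod N /\ bdiv (- N) = - bdiv N.
  apply: bdivmod_uniq; first by rewrite abszN abs_bmod_le.
  by rewrite {1}(bdivmodE N) opprD mulrN.
by rewrite IH ?abs_bdiv_lt // abszN.
Qed.

Lemma nflen_rS2 : nflen r.+2%:Z = r.+2.
Proof.
rewrite nflen_large //.
have [-> ->] : bmod r.+2%:Z = 1 - r%:Z /\ bdiv r.+2%:Z = 1 by apply: bdivmod_uniq; lia.
rewrite nflen_small //; lia.
Qed.

Lemma nflen_addr1 N : (nflen (N + 1) <= nflen N + 1)%N.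
Proof.
elim/abs_ind: N => N IH.
have [h1|h1] := leqP `|N + 1| r.+1; have [h0|h0] := leqP `|N| r.+1.
- by rewrite !nflen_small //; lia.
- have eN : N = - r.+2%:Z by lia.
  by rewrite (nflen_small h1) eN nflenN nflen_rS2; lia.
- have eN : N + 1 = r.+2%:Z by lia.
  by rewrite (nflen_small h0) eN nflen_rS2; lia.
rewrite (nflen_large h0) (nflen_large h1).
have e := bdivmodE N; have hb := abs_bmod_le N.
have [hr|hr] := eqVneq (bmod N) r%:Z.
  have [-> ->] : bmod (N + 1) = - r%:Z /\ bdiv (N + 1) = bdiv N + 1.
    by apply: bdivmod_uniq; lia.
  by rewrite hr abszN -[X in (_ <= X)%N]addnA leq_add2l (IH _ (abs_bdiv_lt h0)).
have [-> ->] : bmod (N + 1) = bmod N + 1 /\ bdiv (N + 1) = bdiv N.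
  by apply: bdivmod_uniq; lia.
lia.
Qed.

Lemma nflen_addn_le M (n : nat) : (nflen (M + n%:Z) <= nflen M + n)%N.
Proof.
elim: n => [|n IH]; first by rewrite addr0 addn0.
rewrite -addn1 PoszD addrA addnA (leq_trans (nflen_addr1 _)) //.
by rewrite leq_add2r.
Qed.

Lemma nflenD_le M j : (nflen (M + j) <= nflen M + `|j|)%N.
Proof.
case: j => n; first exact: nflen_addn_le.
rewrite NegzE -nflenN opprD opprK -(nflenN M).
exact: nflen_addn_le.
Qed.

Lemma nflen_le_abs N : (nflen N <= `|N|)%N.
Proof. by have := nflenD_le 0 N; rewrite add0r (@nflen_small 0). Qed.

Lemma abs_bmod_bdiv_le N : (`|bmod N| + `|bdiv N| <= `|N|)%N.
Proof.
have := bdivmodE N; have := abs_bmod_le N.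
have [->|q0] := eqVneq (bdiv N) 0; first by lia.
by nia.
Qed.

Lemma nflen_digit_le c M : (nflen (c + k%:Z * M) <= `|c| + 2 + nflen M)%N.
Proof.
have [hN|hN] := leqP `|c + k%:Z * M| r.+1.
  rewrite (nflen_small hN).
  have [->|M0] := eqVneq M 0; first by rewrite mulr0 addr0; lia.
  by move: hN; nia.
rewrite (nflen_large hN).
have [-> ->] : bmod (c + k%:Z * M) = bmod c /\ bdiv (c + k%:Z * M) = M + bdiv c.
  by apply: bdivmod_uniq; rewrite ?abs_bmod_le // {1}(bdivmodE c); ring.
apply: leq_trans (_ : _ <= `|bmod c| + 2 + (nflen M + `|bdiv c|))%N _.
  by rewrite leq_add2l nflenD_le.
by have := abs_bmod_bdiv_le c; lia.
Qed.

Lemma nflen_mulk M : (nflen M <= nflen (k%:Z * M))%N.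
Proof.
have [hN|hN] := leqP `|k%:Z * M| r.+1.
  by have -> : M = 0 by nia.
rewrite (nflen_large hN).
have [-> ->] : bmod (k%:Z * M) = 0 /\ bdiv (k%:Z * M) = M.
  by apply: bdivmod_uniq; rewrite ?add0r.
by rewrite leq_addl.
Qed.

Lemma nflen_mulkX n M : (nflen M <= nflen (k%:Z ^+ n * M))%N.
Proof.
elim: n => [|n IH]; first by rewrite expr0 mul1r.
by rewrite exprS -mulrA (leq_trans IH (nflen_mulk _)).
Qed.

Lemma nflen_kval_le C D : (size C <= D.+1)%N -> (nflen (kval k C) <= weight C + 2 * D)%N.
Proof.
elim: C D => [|c [|c' C] IH] D /=; first by rewrite (@nflen_small 0).
  by rewrite mulr0 addr0 /weight /= => _; have := nflen_le_abs c; lia.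
case: D => [|D] //= hs.
have := IH D hs; have := nflen_digit_le c (kval k (c' :: C)); rewrite /weight /=; lia.
Qed.

Lemma nflen_le_size v X : eval k v = (X, 0) ->
  exists (p : nat) (V : int), X * K ^+ p = V%:~R /\ (nflen V <= size v)%N.
Proof.
move=> ev; have [p [D [C [_ _ hs hval hw]]]] := word_expansion k_gt0 v.
rewrite ev /= in hval hw; exists p, (kval k C); split => //.
by apply: leq_trans (nflen_kval_le hs) _; rewrite -(addn0 (size v)).
Qed.

Lemma nf_minimal m j v : reduced k m -> eval k v = (K ^ j * m%:~R, 0) ->
  (nflen m <= size v)%N.
Proof.
move=> hm /nflen_le_size [p [V [hV hs]]].
have e : K ^ (j + p%:Z) * m%:~R = V%:~R.
  by rewrite expfzDr ?K_neq0 // mulrAC.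
have [n eV] := reduced_expfz_int k_gt1 hm e.
by rewrite eV in hs; exact: leq_trans (nflen_mulkX n m) hs.
Qed.

(* A last pair (x_{d-1}, x_d) = (r, -1) would spell r - k = -(r+1), whose normal form is
   a^-(r+1). *)
Definition carry_free (xs : seq int) (xd : int) : Prop :=
  (last 0 xs = r%:Z -> xd != -1) /\ (last 0 xs = - r%:Z -> xd != 1).

Lemma nf_digit (x Q : int) : (`|x| <= r)%N -> (r.+1 < `|(x + k%:Z * Q)%R|)%N ->
  nf (x + k%:Z * Q) = apow x ++ Lt :: nf Q ++ [:: Lti].
Proof.
by move=> hx hN; rewrite nf_large //; have [-> ->] := bdivmod_uniq hx (erefl (x + k%:Z * Q)).
Qed.

Lemma nf_kval_cword x0 xs xd : xd != 0 -> (`|xd| <= r.+1)%N ->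
  all (fun x => `|x| <= r)%N (x0 :: xs) -> carry_free (x0 :: xs) xd ->
  let N := kval k (rcons (x0 :: xs) xd) in
  [/\ (r.+1 < `|N|)%N, bmod N = x0 & nf N = cword (x0 :: xs) xd].
Proof.
move=> xd0 hxd; elim: xs x0 => [|x1 xs IH] x0 /andP[hx0 hall] hcf N.
  have eN : N = x0 + k%:Z * xd by rewrite /N /= mulr0 addr0.
  have hN : (r.+1 < `|N|)%N.
    move: hcf; rewrite /carry_free /= eN => -[l1 l2].
    have [h2|[h1|h1]] : (2 <= `|xd|)%N \/ xd = 1 \/ xd = -1 by lia.
    - by nia.
    - have : x0 != - r%:Z by apply/eqP => /l2; rewrite h1 eqxx.
      lia.
    - have : x0 != r%:Z by apply/eqP => /l1; rewrite h1 eqxx.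
      lia.
  split => //; first by have [] := bdivmod_uniq hx0 eN.
  by move: hN; rewrite eN => hN; rewrite nf_digit // nf_small // cword_cons cword_nil.
have [hQ _ nfQ] := IH x1 hall hcf.
set Q := kval k (rcons (x1 :: xs) xd) in hQ nfQ.
have eN : N = x0 + k%:Z * Q by [].
have hN : (r.+1 < `|N|)%N by rewrite eN; nia.
split => //; first by have [] := bdivmod_uniq hx0 eN.
by move: hN; rewrite eN => hN; rewrite nf_digit // nfQ (cword_cons x0).
Qed.

Lemma nf_large_cword N : (r.+1 < `|N|)%N -> exists xs xd,
  [/\ xd != 0, (`|xd| <= r.+1)%N, all (fun x => `|x| <= r)%N (bmod N :: xs),
      carry_free (bmod N :: xs) xd & nf N = cword (bmod N :: xs) xd].
Proof.
elim/abs_ind: N => N IH hN.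
have e := bdivmodE N; have hbN := abs_bmod_le N.
rewrite nf_large //.
have [hQ|hQ] := leqP `|bdiv N| r.+1.
  exists [::], (bdiv N); split => //=; rewrite ?hbN //.
  - by apply/eqP => q0; move: hN; rewrite e q0; lia.
  - by split => /= hx; apply/eqP => hq; move: hN; rewrite e hx hq; lia.
  - by rewrite nf_small // cword_cons cword_nil.
have [xs [xd [xd0 hxd hall hcf nfQ]]] := IH _ (abs_bdiv_lt hN) hQ.
exists (bmod (bdiv N) :: xs), xd; split => //=; first by rewrite hbN.
by rewrite nfQ (cword_cons (bmod N)).
Qed.

Lemma nf_inCo m : reduced k m -> inCo r (nf m).
Proof.
move=> hm; have [hs|hl] := leqP `|m| r.+1; first by left; exists m; rewrite nf_small.
have m0 : m != 0 by apply/eqP => m0; move: hl; rewrite m0.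
have hb : bmod m != 0 by rewrite bmod_eq0; move: hm; rewrite /reduced (negPf m0).
have [xs [xd [xd0 hxd hall [l1 l2] ->]]] := nf_large_cword hl.
by right; exists (bmod m :: xs), xd; do 7 split => //.
Qed.

Lemma inCo_nf w : inCo r w -> exists m, reduced k m /\ w = nf m.
Proof.
case=> [[x [hx ->]] | [xs [xd [hs [x00 [xd0 [hxd [hall [l1 [l2 ->]]]]]]]]]].
  exists x; split; last by rewrite nf_small.
  apply/orP; have [->|x0] := eqVneq x 0; [by left | right].
  apply/negP => /dvdzP[q ex]; move: hx x0; rewrite ex abszM absz_nat mulf_eq0 negb_or.
  by move=> hx /andP[q0 _]; move: q0; rewrite -absz_gt0; nia.
case: xs hs x00 hall l1 l2 => [//|x0 xs] _ /= x00 hall l1 l2.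
have [_ hb <-] := nf_kval_cword xd0 hxd hall (conj l1 l2).
by eexists; split; last reflexivity; rewrite /reduced -bmod_eq0 hb x00 orbT.
Qed.

End BalancedExpansion.

Theorem proposition3p2 (r : nat) (hr : (1 <= r)%N) :
  let k := (2 * r + 1)%N in
  (forall g : elt, inG k g -> g.2 = 0 ->
     exists! w : word, inCo r w /\ conjugate k (eval k w) g)
  /\ (forall w : word, inCo r w ->
        [/\ (eval k w).2 = 0,
            geodesic k w
          & forall v : word, conjugate k (eval k w) (eval k v) ->
              (size w <= size v)%N]).
Proof.
move=> k; have k_gt0 : (0 < k)%N by rewrite /k addn1.
have k_gt1 : (1 < k)%N by rewrite /k; lia.
split.
- case=> x h hx /= ->; have [j [m [-> hm]]] := inZk_reduced (x := x) k_gt1 hx.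
  exists (nf r m); split.
    by split; [exact: nf_inCo | rewrite eval_nf //; apply/(conjugateP k_gt0); exists j].
  move=> w [/(inCo_nf hr)[m' [hm' ->]]]; rewrite eval_nf // => /(conjugateP k_gt0)[j' [e]].
  by rewrite (reduced_expfz_inj k_gt1 hm hm' e).
- move=> w /(inCo_nf hr)[m [hm ->]]; rewrite eval_nf //; split => // v.
  + by move=> ev; apply: (nf_minimal hr (j := 0) hm); rewrite ev eval_nf // expr0z mul1r.
  + by case/(conjugateP k_gt0) => j ev; apply: (nf_minimal hr hm ev).
Qed.
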